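(* Let $G$ be a group, $E$ a real Banach space, and $f\colon G\to E$ such that $\|f(xy)+f(xy^{-1})-2f(x)\|\le c$ for all $x,y\in G$, where $c>0$. Then the function $\hat f(x)=\lim_{k\to\infty}\frac{1}{2^k}f(x^{2^k})$ is well-defined, it is a $(G;E)$-pseudo-Jensen function, and $\|\hat f(x)-f(x)\|\le c+\|f(1)\|$ for all $x\in G$.
   Context: A function $g\colon G\to E$ is $(G;E)$-pseudo-Jensen if there is $d>0$ with $\|g(xy)+g(xy^{-1})-2g(x)\|\le d$ for all $x,y\in G$, and $g(x^n)=ng(x)$ for all $x\in G$, $n\in\mathbb{Z}$. *)

From HB Require Import structures.
From mathcomp Require Import all_boot all_order all_algebra.
From mathcomp Require Import all_classical all_reals all_analysis.
Set Implicit Arguments. Unset Strict Implicit. Unset Printing Implicit Defensive.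
Import Order.TTheory GRing.Theory Num.Theory.
Import numFieldNormedType.Exports.
Local Open Scope ring_scope.
Local Open Scope classical_set_scope.

Definition is_group (G : Type) (mul : G -> G -> G) (inv : G -> G) (one : G) : Prop :=
  [/\ (forall x y z, mul x (mul y z) = mul (mul x y) z),
      (forall x, mul one x = x), (forall x, mul x one = x),
      (forall x, mul (inv x) x = one) & (forall x, mul x (inv x) = one)].

Fixpoint gpown (G : Type) (mul : G -> G -> G) (one : G) (x : G) (n : nat) : G :=
  match n with
  | O => one
  | S m => mul x (gpown mul one x m)
  end.

Definition gpowz (G : Type) (mul : G -> G -> G) (inv : G -> G) (one : G)
  (x : G) (z : int) : G :=
  match z with
  | Posz n => gpown mul one x n
  | Negz n => inv (gpown mul one x n.+1)
  end.

Definition pseudo_Jensen (R : realType) (G : Type) (mul : G -> G -> G)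
  (inv : G -> G) (one : G) (E : normedModType R) (g : G -> E) : Prop :=
  (exists2 d : R, 0 < d &
     forall x y, `| g (mul x y) + g (mul x (inv y)) - (2 : R) *: g x | <= d) /\
  (forall x (n : int), g (gpowz mul inv one x n) = n%:~R *: g x).

Definition fhat (R : realType) (G : Type) (mul : G -> G -> G) (one : G)
  (E : normedModType R) (f : G -> E) (x : G) : E :=
  lim ((fun k : nat => ((2 : R) ^+ k)^-1 *: f (gpown mul one x (2 ^ k)%N)) @ \oo).

From HB Require Import structures.
From mathcomp Require Import all_boot all_order all_algebra.
From mathcomp Require Import all_classical all_reals all_analysis.
From mathcomp Require Import lra.
Set Implicit Arguments. Unset Strict Implicit. Unset Printing Implicit Defensive.
Import Order.TTheory GRing.Theory Num.Theory.
Import numFieldNormedType.Exports.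
Local Open Scope ring_scope.
Local Open Scope classical_set_scope.

(* Taking [y = x] in the hypothesis bounds [f (x * x) - 2 f x] by [C = c + |f 1|],
   so consecutive terms of the Hyers sequence [2^-k f (x ^+ 2^k)] differ by at
   most [C / 2^(k+1)]: the sequence is Cauchy and its limit [fhat] stays within
   [C] of [f].  For commuting [g], [h] the powers of [g h] and [g / h] split, so
   the Jensen defect along the sequence is at most [c / 2^k], and [fhat]
   satisfies the Jensen equation exactly on commuting pairs.  The pairs
   [(1, x)] and [(x ^+ n.+1, x)] then give [fhat x^-1 = - fhat x] and the
   recurrence [fhat x^(n+2) + fhat x^n = 2 fhat x^(n+1)], hence
   [fhat (x ^+ n) = n fhat x]; being within [C] of [f], [fhat] has Jensen defect
   at most [c + 4 C]. *)

Lemma cvg_dyadic0 (R : realType) (K : R) : K / 2 ^+ n @[n --> \oo] --> 0.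
Proof.
have half_lt1 : `|2^-1 : R| < 1 by rewrite ger0_norm ?invf_lt1 ?ltr1n.
rewrite -(mulr0 K); apply: cvgM; first exact: cvg_cst.
by under eq_fun do rewrite -exprVn; exact: cvg_expr.
Qed.

Lemma dyadic_bound_cvg0 (R : realType) (V : normedModType R) (v : nat -> V) (K : R) :
  (forall n, `|v n| <= K / 2 ^+ n) -> v @ \oo --> 0.
Proof.
move=> vK; apply/cvgr0Pnorm_lt => e e_gt0.
near=> n; apply: le_lt_trans (vK n) (le_lt_trans (ler_norm _) _).
by near: n; exact: cvgr0_norm_lt (cvg_dyadic0 K) e e_gt0.
Unshelve. all: by end_near.
Qed.

Section DyadicCauchy.
Variables (R : realType) (V : normedModType R) (u : nat -> V) (K : R).
Hypothesis du : forall k, `|u k.+1 - u k| <= K / 2 ^+ k.+1.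

Lemma dyadic_rate_ge0 : 0 <= K.
Proof.
have := le_trans (normr_ge0 _) (du 0).
by rewrite pmulr_lge0 // invr_gt0 exprn_gt0.
Qed.

Lemma dyadic_dist_le n m : `|u (n + m) - u n| <= K / 2 ^+ n - K / 2 ^+ (n + m).
Proof.
elim: m => [|m IH]; first by rewrite addn0 !subrr normr0.
rewrite addnS (le_trans (ler_distD (u (n + m)) _ _)) //.
have halve : K / 2 ^+ (n + m).+1 = K / 2 ^+ (n + m) / 2.
  by rewrite exprS invfM mulrA mulrAC.
by move: (du (n + m)) IH; rewrite halve; lra.
Qed.

Lemma dyadic_dist0_le n : `|u n - u 0| <= K.
Proof.
apply: le_trans (dyadic_dist_le 0 n) _.
by rewrite expr0 divr1 gerBl divr_ge0 ?dyadic_rate_ge0 ?exprn_ge0.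
Qed.

Lemma dyadic_lim_dist_le : cvg (u @ \oo) -> `|lim (u @ \oo) - u 0| <= K.
Proof.
move=> cu.
have cvg_dist : `|u n - u 0| @[n --> \oo] --> `|lim (u @ \oo) - u 0|.
  by apply: cvg_norm; apply: cvgB => //; exact: cvg_cst.
rewrite -(cvg_lim _ cvg_dist) //; apply: limr_le; first exact: cvgP cvg_dist.
by near=> n; exact: dyadic_dist0_le.
Unshelve. all: by end_near.
Qed.

End DyadicCauchy.

Lemma dyadic_cauchy_cvg (R : realType) (V : completeNormedModType R) (u : nat -> V) (K : R) :
  (forall k, `|u k.+1 - u k| <= K / 2 ^+ k.+1) -> cvg (u @ \oo).
Proof.
move=> du; apply/cauchy_cvgP/cauchy_exP => e e_gt0.
have /cvgr0_norm_lt/(_ e e_gt0) [N _ KN] := cvg_dyadic0 K.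
exists (u N); apply: filterS (nbhs_infty_ge N) => k /subnKC <-.
rewrite -ball_normE /= distrC (le_lt_trans (dyadic_dist_le du _ _)) //.
have K_ge0 := dyadic_rate_ge0 du.
have := KN N (leqnn N); rewrite ger0_norm ?divr_ge0 ?exprn_ge0 // => /(le_lt_trans _); apply.
by rewrite gerBl divr_ge0 ?exprn_ge0.
Qed.

Lemma subrACA (V : zmodType) (x y z t : V) : (x - y) - (z - t) = (x - z) - (y - t).
Proof. by rewrite !opprB addrACA [RHS]addrACA [- y + _]addrC. Qed.

Section HyersSequence.
Variables (R : realType) (G : groupType) (E : completeNormedModType R).
Variables (f : G -> E) (c : R).
Hypothesis hf : forall x y : G, `|f (x * y)%g + f (x / y)%g - 2 *: f x| <= c.

Definition hyers_seq (x : G) (k : nat) : E := (2 ^+ k)^-1 *: f (x ^+ (2 ^ k))%g.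
Definition hyers_lim (x : G) : E := lim (hyers_seq x @ \oo).

Let C := c + `|f 1%g|.

Lemma f_sqr_dist_le y : `|f (y * y)%g - 2 *: f y| <= C.
Proof.
have -> : f (y * y)%g - 2 *: f y = f (y * y)%g + f (y / y)%g - 2 *: f y - f 1%g.
  by rewrite mulgV addrAC addrK.
by rewrite (le_trans (ler_normB _ _)) // lerD2r hf.
Qed.

Lemma hyers_seq_step x k : `|hyers_seq x k.+1 - hyers_seq x k| <= C / 2 ^+ k.+1.
Proof.
rewrite /hyers_seq expnSr expgnA expg2; set y := (x ^+ (2 ^ k))%g.
have -> : (2 ^+ k)^-1 *: f y = (2 ^+ k.+1)^-1 *: (2 *: f y) :> E.
  by rewrite scalerA exprS invfM mulrAC mulVf ?mul1r ?pnatr_eq0.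
rewrite -scalerBr normrZ ger0_norm ?invr_ge0 ?exprn_ge0 // mulrC.
by rewrite ler_wpM2r ?invr_ge0 ?exprn_ge0 ?f_sqr_dist_le.
Qed.

Lemma hyers_seq_cvg x : cvg (hyers_seq x @ \oo).
Proof. exact: dyadic_cauchy_cvg (hyers_seq_step x). Qed.

Lemma hyers_lim_dist_le x : `|hyers_lim x - f x| <= C.
Proof.
have -> : f x = hyers_seq x 0 by rewrite /hyers_seq expr0 invr1 scale1r expn0 expg1.
rewrite /hyers_lim; exact: dyadic_lim_dist_le (hyers_seq_step x) (@hyers_seq_cvg x).
Qed.

Lemma hyers_lim1 : hyers_lim 1%g = 0.
Proof.
apply: norm_cvg_lim; apply: (@dyadic_bound_cvg0 _ _ _ `|f 1%g|) => k.
by rewrite /hyers_seq expg1n normrZ ger0_norm ?invr_ge0 ?exprn_ge0 // mulrC.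
Qed.

Lemma hyers_lim_commute g h : commute g h ->
  hyers_lim (g * h)%g + hyers_lim (g / h)%g = 2 *: hyers_lim g.
Proof.
move=> gh; apply/eqP; rewrite -subr_eq0; apply/eqP.
set d := fun k => hyers_seq (g * h)%g k + hyers_seq (g / h)%g k - 2 *: hyers_seq g k.
have d_cvg : d @ \oo --> hyers_lim (g * h)%g + hyers_lim (g / h)%g - 2 *: hyers_lim g.
  apply: cvgB; first by apply: cvgD; exact: hyers_seq_cvg.
  by apply: cvgZ; [exact: cvg_cst | exact: hyers_seq_cvg].
have d_cvg0 : d @ \oo --> 0.
  apply: (@dyadic_bound_cvg0 _ _ _ c) => k.
  rewrite /d /hyers_seq expgMn // expgnFl // scalerA mulrC -scalerA -scalerDr -scalerBr.
  by rewrite normrZ ger0_norm ?invr_ge0 ?exprn_ge0 // mulrC ler_wpM2r ?invr_ge0 ?exprn_ge0.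
by rewrite -(norm_cvg_lim d_cvg) (norm_cvg_lim d_cvg0).
Qed.

Lemma hyers_limV x : hyers_lim x^-1%g = - hyers_lim x.
Proof.
have := hyers_lim_commute (commute_sym (commute1 x)).
by rewrite mul1g div1g hyers_lim1 scaler0 => /eqP; rewrite addrC addr_eq0 => /eqP.
Qed.

Lemma hyers_limXn x n : hyers_lim (x ^+ n)%g = n%:R *: hyers_lim x.
Proof.
suff: hyers_lim (x ^+ n)%g = n%:R *: hyers_lim x /\
      hyers_lim (x ^+ n.+1)%g = n.+1%:R *: hyers_lim x by case.
elim: n => [|n [IHn IHn1]]; first by rewrite expg0 hyers_lim1 scale0r expg1 scale1r.
split=> //; have := hyers_lim_commute (commute_sym (commuteX n.+1 (commute_refl x))).
rewrite -expgSr {1}(expgSr x n) mulgK IHn IHn1 => /(canRL (addrK _)) ->.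
by rewrite scalerA -scalerBl -!natr1; congr (_ *: _); lra.
Qed.

Lemma hyers_lim_jensen_le x y :
  `|hyers_lim (x * y)%g + hyers_lim (x / y)%g - 2 *: hyers_lim x| <= c + 4 * C.
Proof.
set D := fun z => hyers_lim z - f z.
have D_le z : `|D z| <= C by exact: hyers_lim_dist_le.
have -> : hyers_lim (x * y)%g + hyers_lim (x / y)%g - 2 *: hyers_lim x =
    (f (x * y)%g + f (x / y)%g - 2 *: f x) + (D (x * y)%g + D (x / y)%g - 2 *: D x).
  by rewrite /D scalerBr [X in _ = _ + (X - _)]addrACA -opprD subrACA [RHS]addrC subrK.
apply: le_trans (ler_normD _ _) _; apply: lerD; first exact: hf.
apply: le_trans (ler_normB _ _) _; rewrite normrZ ger0_norm //.
have := le_trans (ler_normD _ _) (lerD (D_le (x * y)%g) (D_le (x / y)%g)).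
by have := D_le x; lra.
Qed.

End HyersSequence.

(* [cvg] unfolds to a quantification over neighbourhoods, which would make [x] implicit. *)
Arguments hyers_seq_cvg {R G E f c} hf x.

Definition group_of {G : Type} {mul : G -> G -> G} {inv : G -> G} {one : G}
  (HG : is_group mul inv one) : Type := G.

Section GroupOf.
Variables (G : Type) (mul : G -> G -> G) (inv : G -> G) (one : G).
Hypothesis HG : is_group mul inv one.

HB.instance Definition _ := gen_eqMixin (group_of HG).
HB.instance Definition _ := gen_choiceMixin (group_of HG).
HB.instance Definition _ := @isGroup.Build (group_of HG) one inv mul
  (let: And5 h _ _ _ _ := HG in h) (let: And5 _ h _ _ _ := HG in h)
  (let: And5 _ _ h _ _ := HG in h) (let: And5 _ _ _ h _ := HG in h)
  (let: And5 _ _ _ _ h := HG in h).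

Lemma gpownE (x : group_of HG) n : gpown mul one x n = (x ^+ n)%g.
Proof. by elim: n => // n IHn; rewrite expgS -IHn. Qed.

Lemma hyers_seq_gpown (R : realType) (E : completeNormedModType R)
    (f : group_of HG -> E) (x : group_of HG) :
  (fun k => (2 ^+ k)^-1 *: f (gpown mul one x (2 ^ k)%N)) = hyers_seq f x.
Proof. by apply/funext => k; rewrite gpownE. Qed.

End GroupOf.

Theorem lemma2p8 (R : realType) (G : Type) (mul : G -> G -> G) (inv : G -> G)
  (one : G) (HG : is_group mul inv one) (E : completeNormedModType R)
  (f : G -> E) (c : R) (hc : 0 < c)
  (hf : forall x y : G,
      `| f (mul x y) + f (mul x (inv y)) - (2 : R) *: f x | <= c) :
  (forall x : G,
     cvg ((fun k : nat => ((2 : R) ^+ k)^-1 *: f (gpown mul one x (2 ^ k)%N)) @ \oo)) /\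
  pseudo_Jensen mul inv one (fhat mul one f) /\
  (forall x : G, `| fhat mul one f x - f x | <= c + `| f one |).
Proof.
have hfG : forall x y : group_of HG, `|f (x * y)%g + f (x / y)%g - 2 *: f x| <= c := hf.
have fhatE : fhat mul one f = hyers_lim (f : group_of HG -> E).
  by apply/funext => x; rewrite /fhat (hyers_seq_gpown (HG := HG)).
split=> [x|]; first by rewrite (hyers_seq_gpown (HG := HG)); exact: hyers_seq_cvg hfG x.
rewrite fhatE; split; last exact: hyers_lim_dist_le hfG.
split.
  exists (c + 4 * (c + `|f one|)); last exact: hyers_lim_jensen_le hfG.
  by rewrite ltr_pwDl // mulr_ge0 // addr_ge0 // ltW.
move=> x [n|n]; rewrite /gpowz (gpownE (HG := HG)) ?(hyers_limV hfG) (hyers_limXn hfG) //.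
by rewrite NegzE mulrNz scaleNr.
Qed.
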